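(* Let $\diamond$ be the operation on $\mathcal A$-valued moulds defined in the context. Then: (i) $\diamond$ is associative; (ii) if $N$ is symmetrel, then $M\diamond N=M\circ N$ for every mould $M$; (iii) if $M$ and $N$ are both symmetrel, then $M\circ N$ is symmetrel.
   Context: Let $\bm k$ be a field, $\Omega$ a set with a commutative semigroup law written additively ($[a+b]$ the sum in $\Omega$), $\Omega^*$ the free monoid of words on $\Omega$ with empty word $\mathbf 1$, $\|\bm\omega\|=[\omega_1+\cdots+\omega_n]\in\Omega$ the weight of a nonempty word $\bm\omega=\omega_1\cdots\omega_n$, and $\mathcal H^\Omega$ the $\bm k$-vector space with basis $\Omega^*$. The quasi-shuffle product $\star$ on $\mathcal H^\Omega$ is defined bilinearly by $\mathbf 1\star\bm\omega=\bm\omega\star\mathbf 1=\bm\omega$ and $a\bm u\star b\bm v=a(\bm u\star b\bm v)+b(a\bm u\star\bm v)+[a+b](\bm u\star\bm v)$ for letters $a,b$ and words $\bm u,\bm v$. Let $\mathcal A$ be a commutative unital $\bm k$-algebra; a mould is a linear map $M:\mathcal H^\Omega\to\mathcal A$, $M^{\bm\omega}:=M(\bm\omega)$. A mould $N$ is symmetrel if $N^{\mathbf 1}=1$ and $N^{\bm\omega'\star\bm\omega''}=N^{\bm\omega'}N^{\bm\omega''}$ for all words $\bm\omega',\bm\omega''$. Mould composition: $(M\circ N)^{\mathbf 1}=M^{\mathbf 1}$ and for $\bm\omega\neq\mathbf 1$, $(M\circ N)^{\bm\omega}=\sum_{s\ge1}\sum_{\bm\omega=\bm\omega^1\cdots\bm\omega^s}M^{\|\bm\omega^1\|\cdots\|\bm\omega^s\|}N^{\bm\omega^1}\cdots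 N^{\bm\omega^s}$, the inner sum over all ways of writing $\bm\omega$ as a concatenation of $s$ nonempty words, $\|\bm\omega^1\|\cdots\|\bm\omega^s\|$ being the word formed by their weights. The diamond composition is $(M\diamond N)^{\mathbf 1}=M^{\mathbf 1}N^{\mathbf 1}$ and for $\bm\omega\neq\mathbf 1$, $(M\diamond N)^{\bm\omega}=\sum_{s\ge1}\sum_{\bm\omega=\bm\omega^1\cdots\bm\omega^s}M^{\|\bm\omega^1\|\cdots\|\bm\omega^s\|}N^{\bm\omega^1\star\cdots\star\bm\omega^s}$ (same index set). *)

From HB Require Import structures.
From mathcomp Require Import all_boot all_order all_algebra.
Set Implicit Arguments. Unset Strict Implicit. Unset Printing Implicit Defensive.
Import GRing.Theory.
Local Open Scope ring_scope.

Section Moulds.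
Variable Omega : Type.
Variable add : Omega -> Omega -> Omega.

(* Words of Omega^* are [seq Omega]; the empty word 1 is [::].
   An element of H^Omega with nonnegative integer coefficients (all that is
   needed: quasi-shuffles of words have such coefficients) is represented by
   a list of words, repetitions encoding multiplicities. *)

(* Quasi-shuffle of two words, as a formal sum (list) of words:
   1*w = w*1 = w,  au * bv = a(u * bv) + b(au * v) + [a+b](u * v). *)
Fixpoint qsh (u v : seq Omega) {struct u} : seq (seq Omega) :=
  match u with
  | [::] => [:: v]
  | a :: u' =>
    (fix qsh_u (v : seq Omega) : seq (seq Omega) :=
       match v with
       | [::] => [:: u]
       | b :: v' =>
           map (cons a) (qsh u' v) ++ map (cons b) (qsh_u v')
             ++ map (cons (add a b)) (qsh u' v')
       end) v
  end.

Definition qshL (l1 l2 : seq (seq Omega)) : seq (seq Omega) :=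
  flatten [seq qsh u v | u <- l1, v <- l2].

Definition qsh_iter (ws : seq (seq Omega)) : seq (seq Omega) :=
  foldr (fun w acc => qshL [:: w] acc) [:: [::]] ws.

(* A nonempty word a p is encoded as the pair (a, p). *)
Definition bword (b : Omega * seq Omega) : seq Omega := b.1 :: b.2.

Definition weight (b : Omega * seq Omega) : Omega := foldl add b.1 b.2.

(* All ways of writing a word as a concatenation w^1 ... w^s of nonempty
   words (each exactly once). *)
Fixpoint comps (w : seq Omega) : seq (seq (Omega * seq Omega)) :=
  match w with
  | [::] => [:: [::]]
  | a :: w' =>
      [seq (a, [::]) :: c | c <- comps w'] ++
      flatten [seq match c with
                   | [::] => [::]
                   | bp :: c' => [:: (a, bp.1 :: bp.2) :: c']
                   end | c <- comps w']
  end.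

Variable R : fieldType.
Variable A : comAlgType R.

(* A mould (linear map H^Omega -> A) is determined by its values on the
   basis Omega^*; [ev M s] is its linear extension applied to a formal sum. *)
Definition mould := seq Omega -> A.

Definition ev (M : mould) (s : seq (seq Omega)) : A := \sum_(w <- s) M w.

Definition symmetrel (N : mould) : Prop :=
  N [::] = 1 /\ forall u v : seq Omega, ev N (qsh u v) = N u * N v.

Definition mcomp (M N : mould) : mould := fun w =>
  match w with
  | [::] => M [::]
  | _ => \sum_(c <- comps w) M (map weight c) * \prod_(b <- c) N (bword b)
  end.

Definition diamond (M N : mould) : mould := fun w =>
  match w with
  | [::] => M [::] * N [::]
  | _ => \sum_(c <- comps w) M (map weight c) * ev N (qsh_iter (map bword c))
  end.

End Moulds.

From HB Require Import structures.
From mathcomp Require Import all_boot all_order all_algebra zify.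
Set Implicit Arguments. Unset Strict Implicit. Unset Printing Implicit Defensive.
Import GRing.Theory.
Local Open Scope ring_scope.

(* The diamond composition is the convolution (M ⊗ N) ∘ Δ with the linear map
     Δ w = Σ_(w = w¹⋯wˢ) ‖w¹‖⋯‖wˢ‖ ⊗ (w¹ ⋆ ⋯ ⋆ wˢ)
   on H^Ω.  Part (i) is the coassociativity of Δ.  Part (ii) holds because a
   symmetrel N sends w¹ ⋆ ⋯ ⋆ wˢ to N^w¹ ⋯ N^wˢ.  Part (iii) follows from (ii)
   once Δ is known to be multiplicative for ⋆, on H^Ω and componentwise on
   H^Ω ⊗ H^Ω.  Both properties of Δ are proved by induction on words, splitting
   off the first block w¹; they rest on the commutativity and associativity of ⋆,
   on the additivity of the weight along ⋆, and on deconcatenation being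
   multiplicative for ⋆. *)

Section WordSums.
Variables (Omega : Type) (add : Omega -> Omega -> Omega).
Hypotheses (addA : associative add) (addC : commutative add).
Variable V : nmodType.
Implicit Types (u v z w : seq Omega) (f g : seq Omega -> V).

(** * Quasi-shuffle sums *)

Definition qsum u v f : V := \sum_(z <- qsh add u v) f z.

Lemma eq_qsum u v f g : f =1 g -> qsum u v f = qsum u v g.
Proof. by move=> fg; apply: eq_bigr => z _; apply: fg. Qed.

Lemma qsum_nill v f : qsum [::] v f = f v.
Proof. by rewrite /qsum big_seq1. Qed.

Lemma qsum_nilr u f : qsum u [::] f = f u.
Proof. by case: u => [|a u]; rewrite /qsum big_seq1. Qed.

Lemma qsum_cons a u b v f : qsum (a :: u) (b :: v) f =
  qsum u (b :: v) (fun z => f (a :: z)) + qsum (a :: u) v (fun z => f (b :: z))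
  + qsum u v (fun z => f (add a b :: z)).
Proof. rewrite /qsum /= !big_cat !big_map; exact: addrA. Qed.

Lemma qsumD u v f g : qsum u v (fun z => f z + g z) = qsum u v f + qsum u v g.
Proof. exact: big_split. Qed.

Lemma qsum_sumr (I : Type) (r : seq I) u v (F : I -> seq Omega -> V) :
  qsum u v (fun z => \sum_(i <- r) F i z) = \sum_(i <- r) qsum u v (F i).
Proof. exact: exchange_big. Qed.

Lemma exchange_qsum u v u' v' (F : seq Omega -> seq Omega -> V) :
  qsum u v (fun z => qsum u' v' (F z)) =
  qsum u' v' (fun z' => qsum u v (fun z => F z z')).
Proof. exact: exchange_big. Qed.

Lemma qsumC u v f : qsum u v f = qsum v u f.
Proof.
elim: u v f => [|a u IHu] v f; first by rewrite qsum_nill qsum_nilr.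
elim: v f => [|b v IHv] f; first by rewrite qsum_nill qsum_nilr.
by rewrite !qsum_cons IHu IHv (IHu v) addC [X in X + _]addrC.
Qed.

Lemma qsumA u v t f :
  qsum u v (fun z => qsum z t f) = qsum v t (fun z => qsum u z f).
Proof.
elim: u v t f => [|a u IHu] v t f.
  by rewrite qsum_nill; apply: eq_qsum => z; rewrite qsum_nill.
elim: v t f => [|b v IHv] t f; first by rewrite qsum_nilr qsum_nill.
elim: t f => [|c t IHt] f.
  by rewrite qsum_nilr; apply: eq_qsum => z; rewrite qsum_nilr.
(* Both sides expand into nine terms, sorted by the first letter of the output
   word; [lead_a] and [lead_c] match the terms starting with [a], resp. [c]. *)
have lead_a : qsum u (b :: v) (fun z => qsum z (c :: t) (fun z0 => f (a :: z0))) =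
  qsum v (c :: t) (fun z => qsum u (b :: z) (fun z0 => f (a :: z0))) +
  qsum (b :: v) t (fun z => qsum u (c :: z) (fun z0 => f (a :: z0))) +
  qsum v t (fun z => qsum u (add b c :: z) (fun z0 => f (a :: z0))).
  by rewrite IHu qsum_cons.
have lead_c : qsum u (b :: v) (fun z => qsum (a :: z) t (fun z0 => f (c :: z0))) +
  qsum (a :: u) v (fun z => qsum (b :: z) t (fun z0 => f (c :: z0))) +
  qsum u v (fun z => qsum (add a b :: z) t (fun z0 => f (c :: z0))) =
  qsum (b :: v) t (fun z => qsum (a :: u) z (fun z0 => f (c :: z0))).
  by rewrite -IHt qsum_cons.
rewrite qsum_cons.
under eq_qsum => z do rewrite qsum_cons.
under [qsum (a :: u) v _]eq_qsum => z do rewrite qsum_cons.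
under [qsum u v _]eq_qsum => z do rewrite qsum_cons.
rewrite !qsumD [RHS]qsum_cons; symmetry.
under eq_qsum => z do rewrite qsum_cons.
under [qsum (b :: v) t _]eq_qsum => z do rewrite qsum_cons.
under [qsum v t _]eq_qsum => z do rewrite qsum_cons.
rewrite !qsumD lead_a -lead_c !IHu !IHv addA !addrA.
by rewrite [LHS](ACl (1*4*9*5*8*2*6*10*3*7*11)).
Qed.

Lemma qsumAC u v t f :
  qsum u t (fun z => qsum v z f) = qsum v t (fun z => qsum u z f).
Proof. by under eq_qsum => z do rewrite qsumC; rewrite qsumA qsumC. Qed.

Lemma qsumACA u v u' v' f :
  qsum u v (fun z => qsum u' v' (fun z' => qsum z z' f)) =
  qsum u u' (fun z => qsum v v' (fun z' => qsum z z' f)).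
Proof.
under eq_qsum => z do rewrite -qsumA.
by rewrite qsumA qsumC -qsumA; apply: eq_qsum => z; rewrite qsumA.
Qed.

Definition qsum_headl u v f : V :=
  if u is a :: u' then qsum u' v (fun z => f (a :: z)) else 0.

Definition qsum_headr u v f : V :=
  if v is b :: v' then qsum u v' (fun z => f (b :: z)) else 0.

Definition qsum_headlr u v f : V :=
  if u is a :: u' then
    if v is b :: v' then qsum u' v' (fun z => f (add a b :: z)) else 0
  else 0.

Lemma qsum_heads u v f : u <> [::] -> v <> [::] ->
  qsum u v f = qsum_headl u v f + qsum_headr u v f + qsum_headlr u v f.
Proof. by case: u => [|a u] // _; case: v => [|b v] // _; apply: qsum_cons. Qed.

(** * Weights *)

Local Notation addo := (oAC addA addC).

Lemma addoA : associative addo. Proof. exact: Monoid.mulmA. Qed.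
Lemma addoCA : left_commutative addo. Proof. exact: Monoid.mulmCA. Qed.
Lemma addoACA : interchange addo addo. Proof. exact: Monoid.mulmACA. Qed.

(* [None] is the weight of the empty word, which makes the weight additive. *)
Definition oweight (w : seq Omega) : option Omega := \big[addo/None]_(a <- w) Some a.

Lemma oweight_nil : oweight [::] = None.
Proof. exact: big_nil. Qed.

Lemma oweight_cons a w : oweight (a :: w) = addo (Some a) (oweight w).
Proof. exact: big_cons. Qed.

Lemma oweight_cat w w' : oweight (w ++ w') = addo (oweight w) (oweight w').
Proof. exact: big_cat. Qed.

Lemma oweight_foldl a w : oweight (a :: w) = Some (foldl add a w).
Proof.
elim: w a => [|b w IHw] a; first by rewrite oweight_cons oweight_nil.
by rewrite oweight_cons oweight_cons addoA /= -IHw oweight_cons.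
Qed.

Lemma oweight_nonnil w a w' : oweight w = oweight (a :: w') -> w <> [::].
Proof. by move=> + wE; rewrite wE oweight_nil oweight_foldl. Qed.

Lemma qsum_oweight u v f g :
  (forall z, oweight z = addo (oweight u) (oweight v) -> f z = g z) ->
  qsum u v f = qsum u v g.
Proof.
elim: u v f g => [|a u IHu] v f g fg.
  by rewrite !qsum_nill; apply: fg; rewrite oweight_nil Monoid.mul1m.
elim: v f g fg => [|b v IHv] f g fg.
  by rewrite !qsum_nilr; apply: fg; rewrite oweight_nil Monoid.mulm1.
rewrite !qsum_cons; congr (_ + _ + _).
- by apply: IHu => z wz; apply: fg; rewrite oweight_cons wz addoA -oweight_cons.
- apply: IHv => z wz; apply: fg.
  by rewrite oweight_cons wz addoCA -oweight_cons.
- apply: IHu => z wz; apply: fg.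
  by rewrite oweight_cons wz !oweight_cons -oACE addoACA.
Qed.

(** * Deconcatenation *)

Fixpoint splits (w : seq Omega) : seq (seq Omega * seq Omega) :=
  if w is a :: w' then ([::], w) :: [seq (a :: t.1, t.2) | t <- splits w']
  else [:: ([::], [::])].

Lemma big_splits_cons a w (F : seq Omega * seq Omega -> V) :
  \sum_(t <- splits (a :: w)) F t =
  F ([::], a :: w) + \sum_(t <- splits w) F (a :: t.1, t.2).
Proof. by rewrite /= big_cons big_map. Qed.

Arguments splits : simpl never.

Lemma big_nested_splits_cons (I : Type) (r : seq I) a w
    (F : I -> seq Omega * seq Omega -> V) :
  \sum_(i <- r) \sum_(t <- splits (a :: w)) F i t =
  \sum_(i <- r) F i ([::], a :: w) +
  \sum_(i <- r) \sum_(t <- splits w) F i (a :: t.1, t.2).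
Proof. by rewrite -big_split; apply: eq_bigr => i _; rewrite big_splits_cons. Qed.

Lemma eq_big_splits w (F G : seq Omega * seq Omega -> V) :
  (forall t, t.1 ++ t.2 = w -> F t = G t) ->
  \sum_(t <- splits w) F t = \sum_(t <- splits w) G t.
Proof.
elim: w F G => [|a w IHw] F G FG; first by rewrite !big_seq1 FG.
rewrite !big_splits_cons FG //; congr (_ + _).
by apply: IHw => t /= tw; apply: FG; rewrite /= tw.
Qed.

Lemma qsum_splits u v (F : seq Omega -> seq Omega -> V) :
  qsum u v (fun z => \sum_(t <- splits z) F t.1 t.2) =
  \sum_(t <- splits u) \sum_(t' <- splits v)
     qsum t.1 t'.1 (fun p => qsum t.2 t'.2 (F p)).
Proof.
elim: u v F => [|a u IHu] v F.
  by rewrite qsum_nill big_seq1; apply: eq_bigr => t _; rewrite !qsum_nill.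
elim: v F => [|b v IHv] F.
  by rewrite qsum_nilr; apply: eq_bigr => t _; rewrite big_seq1 !qsum_nilr.
rewrite qsum_cons.
under eq_qsum => z do rewrite big_splits_cons.
under [qsum (a :: u) v _]eq_qsum => z do rewrite big_splits_cons.
under [qsum u v _]eq_qsum => z do rewrite big_splits_cons.
rewrite !qsumD (IHu _ (fun p => F (a :: p))) (IHv (fun p => F (b :: p))).
rewrite (IHu _ (fun p => F (add a b :: p))) !big_splits_cons !big_nested_splits_cons /=.
rewrite qsum_nill qsum_cons.
under [X in _ = _ + (_ + X)]eq_bigr => t _.
  under eq_bigr => t' _ do rewrite qsum_cons.
  by rewrite !big_split; over.
rewrite !big_split /= !addrA [LHS](ACl (1*4*7*5*2*3*6*8)).
congr (_ + _ + _ + _ + _ + _ + _ + _); apply: eq_bigr => t _.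
  by rewrite !qsum_nill.
by rewrite !qsum_nilr.
Qed.

Lemma big_splitsA w (F : seq Omega -> seq Omega -> seq Omega -> V) :
  \sum_(t <- splits w) \sum_(r <- splits t.1) F r.1 r.2 t.2 =
  \sum_(t <- splits w) \sum_(r <- splits t.2) F t.1 r.1 r.2.
Proof.
elim: w F => [|a w IHw] F; first by rewrite !big_seq1.
rewrite !big_splits_cons /= big_seq1.
under eq_bigr => t _ do rewrite big_splits_cons /=.
by rewrite big_split /= (IHw (fun p => F (a :: p))) addrA.
Qed.

(** * The coproduct Δ *)

(* [coprod w] lists the terms ‖w¹‖⋯‖wˢ‖ ⊗ y of Δ w, y running over w¹ ⋆ ⋯ ⋆ wˢ;
   [dsum w F] applies F bilinearly to Δ w. *)
Definition coprod w : seq (seq Omega * seq Omega) :=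
  flatten [seq [seq (map (weight add) c, y) | y <- qsh_iter add (map (@bword _) c)]
          | c <- comps w].

Definition dsum w (F : seq Omega -> seq Omega -> V) : V :=
  \sum_(xy <- coprod w) F xy.1 xy.2.

Lemma dsumE w F : dsum w F =
  \sum_(c <- comps w) \sum_(y <- qsh_iter add (map (@bword _) c))
     F (map (weight add) c) y.
Proof. by rewrite /dsum big_flatten big_map; apply: eq_bigr => c _; rewrite big_map. Qed.

Lemma big_comps_cons a w (G : seq (Omega * seq Omega) -> V) :
  \sum_(c <- comps (a :: w)) G c =
  \sum_(t <- splits w) \sum_(c <- comps t.2) G ((a, t.1) :: c).
Proof.
elim: w a G => [|b w IHw] a G; first by rewrite /= !big_seq1.
rewrite [comps _]/= big_cat big_map big_flatten big_map big_splits_cons /=.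
congr (_ + _); rewrite IHw.
by apply: eq_bigr => t _; apply: eq_bigr => c _; rewrite big_seq1.
Qed.

Lemma big_qshL1 u (l : seq (seq Omega)) f :
  \sum_(y <- qshL add [:: u] l) f y = \sum_(v <- l) qsum u v f.
Proof. by rewrite /qshL big_flatten big_allpairs_dep big_seq1. Qed.

Lemma dsum_nil F : dsum [::] F = F [::] [::].
Proof. by rewrite dsumE /= !big_seq1. Qed.

Lemma dsum_cons a w F : dsum (a :: w) F =
  \sum_(t <- splits w)
     dsum t.2 (fun x y => qsum (a :: t.1) y (fun y' => F (foldl add a t.1 :: x) y')).
Proof.
rewrite dsumE big_comps_cons; apply: eq_bigr => t _.
by rewrite dsumE; apply: eq_bigr => c _; rewrite [qsh_iter _ _]/= big_qshL1.
Qed.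

Lemma eq_dsum w F G : (forall x y, F x y = G x y) -> dsum w F = dsum w G.
Proof. by move=> FG; apply: eq_bigr => xy _; apply: FG. Qed.

Lemma dsumD w F G : dsum w (fun x y => F x y + G x y) = dsum w F + dsum w G.
Proof. exact: big_split. Qed.

Lemma dsum_sumr (I : Type) (r : seq I) w (F : I -> seq Omega -> seq Omega -> V) :
  dsum w (fun x y => \sum_(i <- r) F i x y) = \sum_(i <- r) dsum w (F i).
Proof. exact: exchange_big. Qed.

Lemma exchange_dsum w w' (F : seq Omega -> seq Omega -> seq Omega -> seq Omega -> V) :
  dsum w (fun x y => dsum w' (F x y)) =
  dsum w' (fun x' y' => dsum w (fun x y => F x y x' y')).
Proof. exact: exchange_big. Qed.

Lemma exchange_qsum_dsum u v w (F : seq Omega -> seq Omega -> seq Omega -> V) :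
  qsum u v (fun z => dsum w (F z)) = dsum w (fun x y => qsum u v (fun z => F z x y)).
Proof. exact: exchange_big. Qed.

Lemma dsum_oweight w F G :
  (forall x y, oweight x = oweight w -> F x y = G x y) -> dsum w F = dsum w G.
Proof.
have [n] := ubnP (size w); elim: n w F G => // n IHn [|a w] F G sw FG.
  by rewrite !dsum_nil FG.
rewrite !dsum_cons; apply: eq_big_splits => t tw.
apply: IHn => [|x y wx]; first by move: sw; rewrite /= -tw size_cat; lia.
apply: eq_qsum => y'; apply: FG.
by rewrite oweight_cons wx -oweight_foldl -oweight_cat -tw.
Qed.

(* The part of [dsum (p ++ w) F] coming from decompositions with first block [p]. *)
Definition dsum_head (F : seq Omega -> seq Omega -> V) p w : V :=
  if p is a :: q then dsum w (fun x y => qsum p y (F (foldl add a q :: x))) else 0.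

Lemma dsum_heads a w F :
  dsum (a :: w) F = \sum_(t <- splits (a :: w)) dsum_head F t.1 t.2.
Proof. by rewrite big_splits_cons add0r dsum_cons. Qed.

(* Δ is multiplicative for ⋆. *)
Definition qsum_dsum_at u v := forall F,
  qsum u v (fun z => dsum z F) =
  dsum u (fun x y => dsum v (fun x' y' => qsum x x' (fun x'' => qsum y y' (F x'')))).

Section QsumDsumStep.
Variables (a b : Omega) (u v : seq Omega).
Hypothesis IH : forall u' v', (size u' + size v' < size (a :: u) + size (b :: v))%N ->
  qsum_dsum_at u' v'.
Variable F : seq Omega -> seq Omega -> V.

Lemma dsum_qsum_headl :
  dsum (a :: u) (fun x y => dsum (b :: v) (fun x' y' =>
     qsum_headl x x' (fun x'' => qsum y y' (F x'')))) =
  \sum_(t <- splits u) qsum t.2 (b :: v) (dsum_head F (a :: t.1)).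
Proof.
rewrite dsum_cons; apply: eq_big_splits => t tu.
rewrite IH; last by rewrite /= -tu size_cat; lia.
apply: eq_dsum => x y; rewrite exchange_qsum_dsum; apply: eq_dsum => x' y'.
by rewrite /= exchange_qsum; apply: eq_qsum => x''; rewrite qsumA.
Qed.

Lemma dsum_qsum_headr :
  dsum (a :: u) (fun x y => dsum (b :: v) (fun x' y' =>
     qsum_headr x x' (fun x'' => qsum y y' (F x'')))) =
  \sum_(t <- splits v) qsum (a :: u) t.2 (dsum_head F (b :: t.1)).
Proof.
under eq_dsum => x y do rewrite dsum_cons.
rewrite dsum_sumr; apply: eq_big_splits => t tv.
rewrite IH; last by rewrite /= -tv size_cat; lia.
apply: eq_dsum => x y; apply: eq_dsum => x' y'.
by rewrite /= exchange_qsum; apply: eq_qsum => x''; rewrite qsumAC.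
Qed.

Lemma dsum_qsum_headlr :
  dsum (a :: u) (fun x y => dsum (b :: v) (fun x' y' =>
     qsum_headlr x x' (fun x'' => qsum y y' (F x'')))) =
  \sum_(t <- splits u) \sum_(t' <- splits v)
     qsum (a :: t.1) (b :: t'.1) (fun p => qsum t.2 t'.2 (dsum_head F p)).
Proof.
rewrite dsum_cons; apply: eq_big_splits => t tu.
under eq_dsum => x y do under eq_qsum => y' do rewrite dsum_cons.
under eq_dsum => x y do rewrite qsum_sumr.
rewrite dsum_sumr; apply: eq_big_splits => t' tv.
set c := add (foldl add a t.1) (foldl add b t'.1).
(* Every word of (a :: t.1) ⋆ (b :: t'.1) has weight c, so its first block
   contributes the letter c. *)
have -> : qsum (a :: t.1) (b :: t'.1) (fun p => qsum t.2 t'.2 (dsum_head F p)) =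
    qsum (a :: t.1) (b :: t'.1) (fun p => qsum t.2 t'.2 (fun z =>
      dsum z (fun x y => qsum p y (F (c :: x))))).
  apply: qsum_oweight => -[|d p]; rewrite ?oweight_nil !oweight_foldl // => -[wp].
  by rewrite /dsum_head wp.
have IHt : qsum_dsum_at t.2 t'.2 by apply: IH; rewrite /= -tu -tv !size_cat; lia.
under [RHS]eq_qsum => q do rewrite IHt.
rewrite exchange_qsum_dsum; apply: eq_dsum => x y.
rewrite exchange_qsum_dsum exchange_qsum_dsum; apply: eq_dsum => x' y'.
under eq_qsum => y'' do rewrite exchange_qsum.
by rewrite /= exchange_qsum [RHS]exchange_qsum; apply: eq_qsum => x''; rewrite qsumACA.
Qed.

End QsumDsumStep.

Lemma qsum_dsum u v : qsum_dsum_at u v.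
Proof.
have [n] := ubnP (size u + size v); elim: n u v => // n IHn u v suv F.
case: u suv => [|a u] suv.
  by rewrite qsum_nill dsum_nil; apply: eq_dsum => x y; rewrite !qsum_nill.
case: v suv => [|b v] suv.
  by rewrite qsum_nilr; apply: eq_dsum => x y; rewrite dsum_nil !qsum_nilr.
have IH u' v' : (size u' + size v' < size (a :: u) + size (b :: v))%N ->
    qsum_dsum_at u' v'.
  by move=> small; apply: IHn; move: suv small => /=; lia.
have -> : qsum (a :: u) (b :: v) (fun z => dsum z F) =
    qsum (a :: u) (b :: v) (fun z => \sum_(t <- splits z) dsum_head F t.1 t.2).
  by apply: qsum_oweight => -[|c z]; rewrite ?dsum_heads // oweight_nil !oweight_foldl.
rewrite qsum_splits !big_splits_cons big_nested_splits_cons /= qsum_nill.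
rewrite [qsum _ _ (dsum_head F [::])]big1 // add0r.
under eq_bigr => t _ do rewrite qsum_nill.
under [X in _ + (X + _)]eq_bigr => t _ do rewrite qsum_nilr.
have -> : dsum (a :: u) (fun x y => dsum (b :: v) (fun x' y' =>
      qsum x x' (fun x'' => qsum y y' (F x'')))) =
    dsum (a :: u) (fun x y => dsum (b :: v) (fun x' y' =>
      qsum_headl x x' (fun x'' => qsum y y' (F x'')))) +
    dsum (a :: u) (fun x y => dsum (b :: v) (fun x' y' =>
      qsum_headr x x' (fun x'' => qsum y y' (F x'')))) +
    dsum (a :: u) (fun x y => dsum (b :: v) (fun x' y' =>
      qsum_headlr x x' (fun x'' => qsum y y' (F x'')))).
  rewrite -!dsumD; apply: dsum_oweight => x y /oweight_nonnil x0.
  rewrite -!dsumD; apply: dsum_oweight => x' y' /oweight_nonnil x'0.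
  exact: qsum_heads.
by rewrite dsum_qsum_headl // dsum_qsum_headr // dsum_qsum_headlr // addrCA addrA.
Qed.

Lemma dsum_splits w (Phi : seq Omega -> seq Omega -> seq Omega -> V) :
  dsum w (fun x y => \sum_(t <- splits x) Phi t.1 t.2 y) =
  \sum_(t <- splits w)
     dsum t.1 (fun x y => dsum t.2 (fun x' y' => qsum y y' (Phi x x'))).
Proof.
have [n] := ubnP (size w); elim: n w Phi => // n IHn [|a w] Phi sw.
  by rewrite dsum_nil !big_seq1 /= dsum_nil /= dsum_nil qsum_nill.
rewrite big_splits_cons /= dsum_nil dsum_cons.
transitivity (\sum_(t <- splits w)
   (dsum t.2 (fun x y => qsum (a :: t.1) y (Phi [::] (foldl add a t.1 :: x))) +
    dsum t.2 (fun x y => \sum_(r <- splits x)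
      qsum (a :: t.1) y (Phi (foldl add a t.1 :: r.1) r.2)))).
  apply: eq_bigr => t _; rewrite -dsumD; apply: eq_dsum => x y.
  by rewrite -qsum_sumr -qsumD; apply: eq_qsum => y'; rewrite big_splits_cons.
rewrite big_split -dsum_cons; congr (_ + _).
  by apply: eq_dsum => x y; rewrite qsum_nill.
pose F p q r := dsum q (fun x y => qsum (a :: p) y (fun y' =>
  dsum r (fun x' y'' => qsum y' y'' (Phi (foldl add a p :: x) x')))).
transitivity (\sum_(t <- splits w) \sum_(r <- splits t.2) F t.1 r.1 r.2); last first.
  by rewrite -big_splitsA; apply: eq_bigr => t _; rewrite dsum_cons.
apply: eq_big_splits => t tw.
rewrite (IHn _ (fun p q y => qsum (a :: t.1) y (Phi (foldl add a t.1 :: p) q)));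
  last by move: sw; rewrite /= -tw size_cat; lia.
apply: eq_bigr => r _; apply: eq_dsum => x y; rewrite [RHS]exchange_qsum_dsum.
by apply: eq_dsum => x' y'; rewrite qsumA.
Qed.

Definition dsum_coassoc_at w := forall G : seq Omega -> seq Omega -> seq Omega -> V,
  dsum w (fun x y => dsum x (fun x' y' => G x' y' y)) =
  dsum w (fun x y => dsum y (G x)).

Section CoassocStep.
Variables (a : Omega) (G : seq Omega -> seq Omega -> seq Omega -> V).

(* The terms of both sides of coassociativity at [a :: p ++ q ++ r] whose two
   nested first blocks are [a :: p] and [a :: p ++ q]. *)
Definition coassoc_term p q r : V :=
  dsum q (fun x1 y1 => qsum (a :: p) y1 (fun y1' => dsum r (fun x2 y2 =>
    dsum x2 (fun x3 y3 => qsum (foldl add a p :: x1) y3 (fun z =>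
      qsum y1' y2 (G (foldl add a (p ++ q) :: x3) z)))))).

Lemma coassoc_lhs p r :
  dsum r (fun x y => qsum (a :: p) y (fun y' =>
    dsum (foldl add a p :: x) (fun x' y'' => G x' y'' y'))) =
  \sum_(s <- splits r) coassoc_term p s.1 s.2.
Proof.
under eq_dsum => x y do under eq_qsum => y' do rewrite dsum_cons.
under eq_dsum => x y do rewrite qsum_sumr.
rewrite (dsum_splits _ (fun q r' y => qsum (a :: p) y (fun y' =>
  dsum r' (fun x' y'' => qsum (foldl add a p :: q) y''
    (fun z => G (foldl add (foldl add a p) q :: x') z y'))))).
apply: eq_bigr => s _; apply: dsum_oweight => x y wx.
have -> : foldl add (foldl add a p) x = foldl add a (p ++ s.1).
  apply: Some_inj.
  by rewrite -oweight_foldl oweight_cons wx -oweight_cons oweight_foldl foldl_cat.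
rewrite [RHS]exchange_qsum_dsum; apply: eq_dsum => x' y'.
rewrite -qsumA; apply: eq_qsum => y''.
rewrite exchange_qsum_dsum; apply: eq_dsum => x'' y3.
exact: exchange_qsum.
Qed.

Lemma coassoc_rhs p r : dsum_coassoc_at r ->
  dsum r (fun x y => qsum (a :: p) y (fun y' => dsum y' (G (foldl add a p :: x)))) =
  \sum_(s <- splits p) coassoc_term s.1 s.2 r.
Proof.
move=> coassoc_r.
under eq_dsum => x y do rewrite qsum_dsum.
rewrite exchange_dsum.
under eq_dsum => x y do rewrite -(coassoc_r (fun x' x'' y'' =>
  qsum x x'' (fun z => qsum y y'' (G (foldl add a p :: x') z)))).
by rewrite dsum_cons; apply: eq_big_splits => s sp; rewrite /coassoc_term sp.
Qed.

End CoassocStep.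

Lemma dsum_coassoc w : dsum_coassoc_at w.
Proof.
have [n] := ubnP (size w); elim: n w => // n IHn [|a w] sw G; first by rewrite !dsum_nil.
rewrite dsum_cons [RHS]dsum_cons.
under eq_bigr => t _ do rewrite coassoc_lhs.
rewrite -big_splitsA; apply: eq_big_splits => t tw; rewrite coassoc_rhs //.
by apply: IHn; move: sw; rewrite /= -tw size_cat; lia.
Qed.

End WordSums.

Arguments qsum {Omega} add {V} u v f.
Arguments dsum {Omega} add {V} w F.

Section Moulds.
Variables (Omega : Type) (add : Omega -> Omega -> Omega).
Hypotheses (addA : associative add) (addC : commutative add).
Variables (R : fieldType) (A : comAlgType R).
Implicit Types M N P : mould Omega A.

Lemma diamond_dsum M N w : diamond add M N w = dsum add w (fun x y => M x * N y).
Proof.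
rewrite dsumE; case: w => [|a w] /=; first by rewrite !big_seq1.
by apply: eq_bigr => c _; rewrite mulr_sumr.
Qed.

Lemma dsum_mull w (c : A) F : dsum add w (fun x y => c * F x y) = c * dsum add w F.
Proof. by rewrite /dsum mulr_sumr. Qed.

Lemma dsum_mulr w (c : A) F : dsum add w (fun x y => F x y * c) = dsum add w F * c.
Proof. by rewrite /dsum mulr_suml. Qed.

Lemma diamondA M N P : diamond add (diamond add M N) P =1 diamond add M (diamond add N P).
Proof.
move=> w; rewrite !diamond_dsum.
under eq_dsum => x y do rewrite diamond_dsum -dsum_mulr.
under [RHS]eq_dsum => x y do rewrite diamond_dsum -dsum_mull.
rewrite (dsum_coassoc addA addC w (fun x x' y => M x * N x' * P y)).
by apply: eq_dsum => x y; apply: eq_dsum => x' y'; rewrite mulrA.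
Qed.

Lemma ev_qsh_iter N ws : symmetrel add N ->
  ev N (qsh_iter add ws) = \prod_(w <- ws) N w.
Proof.
move=> [N1 NM]; elim: ws => [|w ws IHws]; first by rewrite /ev big_seq1 big_nil.
rewrite big_cons -IHws /ev big_qshL1 mulr_sumr.
by apply: eq_bigr => v _; rewrite -NM.
Qed.

Lemma diamond_mcomp M N : symmetrel add N -> diamond add M N =1 mcomp add M N.
Proof.
move=> symN [|a w] /=; first by case: symN => -> _; rewrite mulr1.
by apply: eq_bigr => c _; rewrite ev_qsh_iter // big_map.
Qed.

Lemma mcomp_symmetrel M N :
  symmetrel add M -> symmetrel add N -> symmetrel add (mcomp add M N).
Proof.
move=> [M1 MM] symN; split=> [|u v]; first exact: M1.
have mcompE w : mcomp add M N w = dsum add w (fun x y => M x * N y).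
  by rewrite -diamond_mcomp // diamond_dsum.
have -> : ev (mcomp add M N) (qsh add u v) =
    qsum add u v (fun z => dsum add z (fun x y => M x * N y)).
  by apply: eq_bigr => z _; apply: mcompE.
rewrite (qsum_dsum addA addC) !mcompE -dsum_mulr; apply: eq_dsum => x y.
rewrite -dsum_mull; apply: eq_dsum => x' y'.
case: symN => _ NM; rewrite mulrACA -MM -NM /ev mulr_suml.
by apply: eq_bigr => z _; rewrite mulr_sumr.
Qed.

End Moulds.

Theorem mainTheorem4 (Omega : Type) (add : Omega -> Omega -> Omega)
  (addA : associative add) (addC : commutative add)
  (R : fieldType) (A : comAlgType R) :
  (forall M N P : mould Omega A,
      diamond add (diamond add M N) P =1 diamond add M (diamond add N P)) /\
  (forall M N : mould Omega A,
      symmetrel add N -> diamond add M N =1 mcomp add M N) /\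
  (forall M N : mould Omega A,
      symmetrel add M -> symmetrel add N -> symmetrel add (mcomp add M N)).
Proof.
split; first exact: diamondA.
split; first exact: diamond_mcomp.
exact: mcomp_symmetrel.
Qed.
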